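(* Let $\boldsymbol\alpha=(\alpha_i(\theta_b))_{1\le i\le k,1\le b\le B}$ be a fixed static allocation in the setting described in the context. Then for every $b\in\{1,\dots,B\}$ and every solution $i\neq i^b$, $$\liminf_{n\to\infty}-\frac1n\log \mathrm{P}\left(m^n_{i,b}=1\right)\;\ge\; G_i(\theta_b),$$ where $m^n_{i,b}=\mathbf 1\{i=i^b_n\}$.
   Context: There are $k\ge2$ solutions and $B$ parameter values $\theta_1,\dots,\theta_B$ with probabilities $p_1,\dots,p_B\ge 0$, $\sum_b p_b=1$. For each $i,b$, $y_i(\theta_b)\in\mathbb R$ is the (unknown) mean simulation output of solution $i$ at $\theta_b$. For each $b$ the conditional optimum $i^b=\arg\min_{1\le i\le k}y_i(\theta_b)$ is assumed unique. Simulation outputs $Y_{i1}(\theta_b),Y_{i2}(\theta_b),\dots$ at pair $(i,\theta_b)$ are i.i.d. $N(y_i(\theta_b),\lambda_i^2(\theta_b))$ with known $\lambda_i(\theta_b)>0$, independent across pairs. A static allocation is a vector $\boldsymbol\alpha$ with $\alpha_i(\theta_b)\ge0$ and $\sum_{i,b}\alpha_i(\theta_b)=1$; given $\boldsymbol\alpha$, after a total budget $n$ the pair $(i,\theta_b)$ has received $N_i^n(\theta_b)$ replications, where $N_i^n(\theta_b)/n\to\alpha_i(\theta_b)$ and $N_i^n(\theta_b)\to\infty$ as $n\to\infty$ (even if $\alpha_i(\theta_b)=0$). Let $\mu_{i,n}(\theta_b)$ be the sample mean of the $N_i^n(\theta_b)$ outputs at $(i,\theta_b)$ and $i^b_n=\arg\min_i\mu_{i,n}(\theta_b)$.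 For $i\ne i^b$ define $$G_i(\theta_b)=\frac{(y_i(\theta_b)-y_{i^b}(\theta_b))^2}{2\left(\lambda_i^2(\theta_b)/\alpha_i(\theta_b)+\lambda_{i^b}^2(\theta_b)/\alpha_{i^b}(\theta_b)\right)},$$ with $G_i(\theta_b)=0$ if $\alpha_i(\theta_b)=0$ or $\alpha_{i^b}(\theta_b)=0$. *)

From HB Require Import structures.
From mathcomp Require Import all_boot all_order all_algebra.
From mathcomp Require Import all_classical all_reals all_analysis.
Set Implicit Arguments. Unset Strict Implicit. Unset Printing Implicit Defensive.
Import Order.TTheory GRing.Theory Num.Theory.
Local Open Scope classical_set_scope.
Local Open Scope ring_scope.

Definition mutually_independent (I : eqType) d (T : measurableType d)
    (R : realType) (P : probability T R) (X : I -> T -> R) : Prop :=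
  forall (J : seq I) (A : I -> set R),
    uniq J -> (forall t, t \in J -> measurable (A t)) ->
    P (\big[setI/setT]_(t <- J) (X t @^-1` A t)) =
    (\prod_(t <- J) P (X t @^-1` A t))%E.

Definition sample_mean (T : Type) (R : realType) (Yr : nat -> T -> R) (N : nat)
    (w : T) : R :=
  (\sum_(r < N) Yr r w) / N%:R.

(* The rate function G_i(theta_b) of the paper (with the convention that it
   is 0 when one of the two allocations is 0). [ib] is the conditional
   optimum i^b. *)
Definition Grate (R : realType) (k B : nat) (y lam alpha : 'I_k -> 'I_B -> R)
    (ib : 'I_k) (i : 'I_k) (b : 'I_B) : R :=
  if (alpha i b == 0) || (alpha ib b == 0) then 0
  else (y i b - y ib b) ^+ 2 /
       (2 * (lam i b ^+ 2 / alpha i b + lam ib b ^+ 2 / alpha ib b)).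

Definition neglog (R : realType) (x : R) : \bar R :=
  if x == 0 then +oo%E else (- ln x)%:E.

Definition rate_seq (R : realType) (p : nat -> \bar R) : (\bar R)^nat :=
  fun n => (((n%:R)^-1)%:E * neglog (fine (p n)))%E.

(* Chernoff bound for two independent Gaussian sample means.  With
   delta = y_i - y_ib > 0 and v_n = lam_i^2/N_i + lam_ib^2/N_ib, the event
   that solution i has the smallest sample mean is contained in
   {mean_i <= mean_ib}, whose probability is at most
   E exp(t (mean_ib - mean_i)) = exp (- t delta + t^2 v_n / 2): independence
   factorises the expectation into Gaussian moment generating functions.  The
   choice t = delta / v_n gives exp (- delta^2 / (2 v_n)), and
   delta^2 / (2 n v_n) tends to G_i(theta_b) because N_i / n -> alpha_i.
   When an allocation vanishes G_i = 0 and the bound is trivial. *)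

From HB Require Import structures.
From mathcomp Require Import all_boot all_order all_algebra.
From mathcomp Require Import all_classical all_reals all_analysis.
Import Order.TTheory GRing.Theory Num.Theory numFieldNormedType.Exports.
From mathcomp Require Import measurable_realfun normal_distribution.
From mathcomp Require Import ring.
Import HBNNSimple.

Set Implicit Arguments. Unset Strict Implicit. Unset Printing Implicit Defensive.
Local Open Scope classical_set_scope.
Local Open Scope ring_scope.

Section density_transfer.
Local Open Scope ereal_scope.
Context d1 d2 d3 (T1 : measurableType d1) (T2 : measurableType d2)
  (V : measurableType d3) (R : realType).
Variables (mu : {measure set T1 -> \bar R}) (nu : {measure set T2 -> \bar R}).
Variables (X : T1 -> V) (X' : T2 -> V).
Hypotheses (mX : measurable_fun setT X) (mX' : measurable_fun setT X').
Variables (g : T2 -> R) (c : R).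
Hypotheses (g0 : forall x, (0 <= g x)%R) (mg : measurable_fun setT g).
Hypothesis density : forall A, measurable A ->
  c%:E * mu (X @^-1` A) = \int[nu]_x (\1_A (X' x) * g x)%:E.

Let mpreX A : measurable A -> measurable (X @^-1` A).
Proof. by move=> mA; rewrite -[X @^-1` A]setTI; exact: mX. Qed.

Lemma density_transfer_nnsfun (h : {nnsfun V >-> R}) :
  c%:E * \int[mu]_x (h (X x))%:E = \int[nu]_x (h (X' x) * g x)%:E.
Proof.
have mh r : measurable (h @^-1` [set r]) by exact: measurable_funPTI.
have mhX r : measurable_fun setT (fun x => \1_(h @^-1` [set r]) (X x) : R).
  by apply: measurableT_comp => //; exact/measurable_indicP.
have mhX' r : measurable_fun setT (fun x => \1_(h @^-1` [set r]) (X' x) : R).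
  by apply: measurableT_comp => //; exact/measurable_indicP.
have hE x : (h x)%:E = \sum_(r \in range h) (r * \1_(h @^-1` [set r]) x)%:E.
  by rewrite fimfunE fsumEFin.
under eq_integral do rewrite hE.
under [RHS]eq_integral => x _.
  rewrite EFinM hE ge0_mule_fsuml; last by move=> r; exact: nnfun_muleindic_ge0.
  over.
rewrite !ge0_integral_fsum //; last 4 first.
- move=> r; apply: emeasurable_funM; apply/measurable_EFinP => //.
  exact: measurable_funM.
- by move=> r x _; rewrite mule_ge0 ?lee_fin //; exact: nnfun_muleindic_ge0.
- by move=> r; apply/measurable_EFinP/measurable_funM.
- by move=> r x _; exact: nnfun_muleindic_ge0.
rewrite ge0_mule_fsumr; last first.
  by move=> r; apply: integral_ge0 => x _; exact: nnfun_muleindic_ge0.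
apply: eq_fsbigr => r /set_mem [v _ <-{r}].
under eq_integral do rewrite EFinM.
under [RHS]eq_integral do rewrite -EFinM -mulrA EFinM.
rewrite !ge0_integralZl_EFin //.
- by rewrite muleCA integral_indic ?setIT ?density //; exact: mpreX.
- by move=> x _; rewrite lee_fin mulr_ge0.
- by apply/measurable_EFinP; exact: measurable_funM.
- exact/measurable_EFinP.
Qed.

Lemma density_transfer (f : V -> R) :
  (forall v, (0 <= f v)%R) -> measurable_fun setT f ->
  c%:E * \int[mu]_x (f (X x))%:E = \int[nu]_x (f (X' x) * g x)%:E.
Proof.
move=> f0 mf; have mfE : measurable_fun setT (EFin \o f) by exact/measurable_EFinP.
pose h := nnsfun_approx measurableT mfE.
have h_cvg v : (h n v)%:E @[n --> \oo] --> (f v)%:E.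
  by apply: cvg_nnsfun_approx => // w _; rewrite lee_fin.
have h_nd v : nondecreasing_seq (h^~ v).
  by move=> m n mn; exact/lefP/nd_nnsfun_approx.
have mh n : measurable_fun setT (h n) by exact: measurable_funPT.
have limX : \int[mu]_x (f (X x))%:E = limn (fun n => \int[mu]_x (h n (X x))%:E).
  rewrite -monotone_convergence //.
  - by apply: eq_integral => x _; apply/esym/cvg_lim => //; exact: h_cvg.
  - by move=> n; apply/measurable_EFinP; exact: measurableT_comp.
  - by move=> n x _; rewrite lee_fin.
  - by move=> x _ m n mn; rewrite lee_fin; exact: h_nd.
have limX' : \int[nu]_x (f (X' x) * g x)%:E =
    limn (fun n => \int[nu]_x (h n (X' x) * g x)%:E).
  rewrite -monotone_convergence //.
  - apply: eq_integral => x _; apply/esym/cvg_lim => //.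
    under eq_fun do rewrite EFinM.
    by rewrite EFinM; apply: cvgeZr => //; exact: h_cvg.
  - move=> n; apply/measurable_EFinP; apply: measurable_funM => //.
    exact: measurableT_comp.
  - by move=> n x _; rewrite lee_fin mulr_ge0.
  - by move=> x _ m n mn; rewrite lee_fin ler_wpM2r //; exact: h_nd.
rewrite limX limX' -limeMl //.
  by congr (limn _); apply/funext => n; exact: density_transfer_nnsfun.
apply: ereal_nondecreasing_is_cvgn => m n mn; apply: ge0_le_integral => //.
- by move=> x _; rewrite lee_fin.
- by apply/measurable_EFinP; exact: measurableT_comp.
- by apply/measurable_EFinP; exact: measurableT_comp.
- by move=> x _; rewrite lee_fin; exact: h_nd.
Qed.

End density_transfer.

Lemma prod_indic_preimage (T : Type) (R : pzRingType) (I : Type) (J : seq I)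
    (X : I -> T -> R) (A : I -> set R) x :
  \prod_(t <- J) \1_(A t) (X t x) =
  \1_(\big[setI/setT]_(t <- J) (X t @^-1` A t)) x :> R.
Proof.
elim: J => [|t J IH]; first by rewrite !big_nil indicT.
by rewrite !big_cons IH indicI.
Qed.

Section independent_product.
Local Open Scope ereal_scope.
Context d (T : measurableType d) (R : realType) (P : probability T R) (I : eqType).
Variables (X : I -> T -> R) (f : I -> R -> R).
Hypotheses (mX : forall t, measurable_fun setT (X t))
  (indX : mutually_independent P X).
Hypotheses (f0 : forall t x, (0 <= f t x)%R) (mf : forall t, measurable_fun setT (f t))
  (f_fin : forall t, \int[P]_x (f t (X t x))%:E \is a fin_num).

Let mpreX t A : measurable A -> measurable (X t @^-1` A).
Proof. by move=> mA; rewrite -[X t @^-1` A]setTI; exact: mX. Qed.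

(* The indicator factors make the induction work: the induction hypothesis,
   with an extra indicator for the peeled-off index [t0], is exactly the
   hypothesis of [density_transfer] for the factor [f t0 (X t0 _)]. *)
Lemma integral_prod_indep_indic (J1 J2 : seq I) (A : I -> set R) :
  uniq (J1 ++ J2) -> (forall t, measurable (A t)) ->
  \int[P]_x ((\prod_(t <- J1) f t (X t x)) * \prod_(t <- J2) \1_(A t) (X t x))%:E =
  (\prod_(t <- J1) \int[P]_x (f t (X t x))%:E) * \prod_(t <- J2) P (X t @^-1` A t).
Proof.
elim: J1 J2 A => [|t0 J1 IH] J2 A uJ mA.
  rewrite big_nil mul1e.
  under eq_integral do rewrite big_nil mul1r prod_indic_preimage.
  rewrite integral_indic ?setIT //; first exact: indX.
  by apply: bigsetI_measurable => t _; exact: mpreX.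
move: uJ => /= /andP[t0J uJ].
pose H x := (\prod_(t <- J1) f t (X t x) * \prod_(t <- J2) \1_(A t) (X t x))%R.
pose c := (\prod_(t <- J1) \int[P]_x (f t (X t x))%:E) *
  \prod_(t <- J2) P (X t @^-1` A t).
have c_fin : c \is a fin_num.
  rewrite fin_numM //; apply: prode_fin_num => t _ //; exact/fin_num_measure/mpreX.
have mH : measurable_fun setT H.
  apply: measurable_funM; apply: measurable_prod => t _.
    exact: measurableT_comp.
  by apply: measurableT_comp => //; exact/measurable_indicP.
have H0 x : (0 <= H x)%R by apply: mulr_ge0; apply: prodr_ge0 => t _.
under eq_integral do rewrite big_cons -mulrA -/(H _).
rewrite big_cons -muleA -/c -(fineK c_fin) muleC.
apply/esym; apply: density_transfer => // B mB.
pose A' t := if t == t0 then B else A t.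
have A'E t : t \in J2 -> A' t = A t.
  by rewrite /A'; case: eqP => // -> t0J2; move: t0J; rewrite mem_cat t0J2 orbT.
have A't0 : A' t0 = B by rewrite /A' eqxx.
have uJ' : uniq (J1 ++ t0 :: J2) by rewrite -cat1s uniq_catCA /= t0J.
have indic_cons x : (\prod_(t <- t0 :: J2) \1_(A' t) (X t x) =
    \1_B (X t0 x) * \prod_(t <- J2) \1_(A t) (X t x))%R.
  by rewrite big_cons A't0; congr (_ * _)%R; apply: eq_big_seq => t /A'E ->.
have prob_cons : \prod_(t <- t0 :: J2) P (X t @^-1` A' t) =
    P (X t0 @^-1` B) * \prod_(t <- J2) P (X t @^-1` A t).
  by rewrite big_cons A't0; congr (_ * _); apply: eq_big_seq => t /A'E ->.
have mA' t : measurable (A' t) by rewrite /A'; case: ifP.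
transitivity (\int[P]_x ((\prod_(t <- J1) f t (X t x)) *
    \prod_(t <- t0 :: J2) \1_(A' t) (X t x))%:E); last first.
  by apply: eq_integral => x _; rewrite indic_cons mulrCA.
by rewrite IH // prob_cons fineK // [RHS]muleCA muleC.
Qed.

Lemma integral_prod_indep (J : seq I) : uniq J ->
  \int[P]_x (\prod_(t <- J) f t (X t x))%:E = \prod_(t <- J) \int[P]_x (f t (X t x))%:E.
Proof.
move=> uJ; have := @integral_prod_indep_indic J [::] (fun=> setT).
rewrite cats0 big_nil mule1 => <- //.
by apply: eq_integral => x _; rewrite big_nil mulr1.
Qed.

End independent_product.

Lemma normal_pdf_expR_tilt (R : realType) (m s u x : R) : s != 0 ->
  expR (u * x) * normal_pdf m s x =
  expR (u * m + u ^+ 2 * s ^+ 2 / 2) * normal_pdf (m + u * s ^+ 2) s x.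
Proof.
move=> s0; rewrite /normal_pdf (negbTE s0) /normal_fun.
rewrite mulrCA -expRD [RHS]mulrCA -expRD; congr (_ * expR _).
by field.
Qed.

Lemma integral_expR_normal_pdf (R : realType) (m s u : R) : s != 0 ->
  (\int[lebesgue_measure]_x (expR (u * x) * normal_pdf m s x)%:E =
   (expR (u * m + u ^+ 2 * s ^+ 2 / 2))%:E)%E.
Proof.
move=> s0; under eq_integral do rewrite normal_pdf_expR_tilt // EFinM.
rewrite integralZl //; first by rewrite integral_normal_pdf mule1.
exact: integrable_normal_pdf.
Qed.

Lemma integral_expR_normal d (T : measurableType d) (R : realType)
    (P : probability T R) (Y : T -> R) (m s u : R) :
  s != 0 -> measurable_fun setT Y ->
  (forall A, measurable A -> P (Y @^-1` A) = normal_prob m s A) ->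
  (\int[P]_x (expR (u * Y x))%:E = (expR (u * m + u ^+ 2 * s ^+ 2 / 2))%:E)%E.
Proof.
move=> s0 mY lawY; rewrite -[LHS]mul1e -integral_expR_normal_pdf //.
apply: (density_transfer (nu := lebesgue_measure) (X' := id) mY
  (measurable_id (D := setT)) (normal_pdf_ge0 m s) (measurable_normal_pdf m s) _
  (f := fun v => expR (u * v))).
- move=> A mA; rewrite mul1e; transitivity (normal_prob m s A); first exact: lawY.
  rewrite /normal_prob [LHS]integral_mkcond epatch_indic.
  by apply: eq_integral => x _ /=; rewrite EFinM muleC.
- by move=> x; exact: expR_ge0.
- by apply: measurableT_comp => //; exact: measurable_funM.
Qed.

(* In the non-degenerate case [Grate y lam alpha ib i b] unfolds to [pair_rate
   (y i b - y ib b) (lam i b ^+ 2) (lam ib b ^+ 2) (alpha i b) (alpha ib b)]. *)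
Definition pair_rate (F : fieldType) (delta v1 v2 a1 a2 : F) :=
  delta ^+ 2 / (2 * (v1 / a1 + v2 / a2)).

(* No side condition is needed, thanks to the convention [x / 0 = 0]. *)
Lemma pair_rate_scale (F : fieldType) (delta v1 v2 x1 x2 c : F) :
  pair_rate delta v1 v2 (x1 / c) (x2 / c) = pair_rate delta v1 v2 x1 x2 / c.
Proof.
rewrite /pair_rate !invf_div.
rewrite (_ : v1 * (c / x1) + v2 * (c / x2) = c * (v1 / x1 + v2 / x2)); last by ring.
by rewrite mulrCA invfM; ring.
Qed.

Lemma cvg_pair_rate (R : realType) (delta v1 v2 a1 a2 : R) (u1 u2 : R^nat) :
  0 < v1 -> 0 < v2 -> 0 < a1 -> 0 < a2 -> u1 n @[n --> \oo] --> a1 ->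
  u2 n @[n --> \oo] --> a2 ->
  pair_rate delta v1 v2 (u1 n) (u2 n) @[n --> \oo] --> pair_rate delta v1 v2 a1 a2.
Proof.
move=> v1_gt0 v2_gt0 a1_gt0 a2_gt0 u1a1 u2a2.
apply: cvgM; first exact: cvg_cst.
apply: cvgV; first by rewrite gt_eqF // mulr_gt0 // addr_gt0 // divr_gt0.
apply: cvgM; first exact: cvg_cst.
by apply: cvgD; apply: cvgM; (try exact: cvg_cst); apply: cvgV; rewrite ?gt_eqF.
Qed.

Section sample_means.
Context d (T : measurableType d) (R : realType) (P : probability T R) (I : eqType).
Variables (Y : I -> nat -> T -> R) (m s : I -> R).
Hypotheses (s0 : forall i, s i != 0) (mY : forall i r, measurable_fun setT (Y i r))
  (lawY : forall i r A, measurable A -> P (Y i r @^-1` A) = normal_prob (m i) (s i) A)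
  (indY : mutually_independent P (fun t : I * nat => Y t.1 t.2)).

Lemma measurable_sample_mean i N : measurable_fun setT (sample_mean (Y i) N).
Proof. by apply: measurable_funM => //; exact: measurable_sum. Qed.

Lemma integral_expR_sample_mean_diff (i j : I) (Ni Nj : nat) (t : R) :
  i != j -> (0 < Ni)%N -> (0 < Nj)%N ->
  (\int[P]_x (expR (t * (sample_mean (Y j) Nj x - sample_mean (Y i) Ni x)))%:E =
   (expR (t * (m j - m i) + t ^+ 2 * (s i ^+ 2 / Ni%:R + s j ^+ 2 / Nj%:R) / 2))%:E)%E.
Proof.
move=> ij Ni0 Nj0.
pose f (tau : I * nat) x := if tau.1 == i then expR (- (t / Ni%:R) * x)
                            else expR (t / Nj%:R * x).
pose J := [seq (i, r) | r <- index_iota 0 Ni] ++ [seq (j, r) | r <- index_iota 0 Nj].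
have ji : (j == i) = false by rewrite eq_sym (negbTE ij).
have expR_prod x : expR (t * (sample_mean (Y j) Nj x - sample_mean (Y i) Ni x)) =
    \prod_(tau <- J) f tau (Y tau.1 tau.2 x).
  rewrite big_cat !big_map /f /= eqxx ji -!expR_sum -expRD; congr expR.
  by rewrite /sample_mean !big_mkord -!mulr_sumr; ring.
have uJ : uniq J.
  rewrite cat_uniq !map_inj_uniq ?iota_uniq //; try by move=> r1 r2 [].
  rewrite andbT /=; apply/hasPn => _ /mapP [r _ ->]; apply/mapP => -[r' _ [e _]].
  by move: ij; rewrite e eqxx.
have mgf a r u : (\int[P]_x (expR (u * Y a r x))%:E =
    (expR (u * m a + u ^+ 2 * s a ^+ 2 / 2))%:E)%E.
  exact: integral_expR_normal (s0 _) (mY _ _) (lawY _ _).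
rewrite (eq_integral (fun x => (\prod_(tau <- J) f tau (Y tau.1 tau.2 x))%:E));
  last by move=> x _; rewrite expR_prod.
rewrite integral_prod_indep //; last 3 first.
- by move=> tau x; rewrite /f; case: ifP => _; exact: expR_ge0.
- by move=> tau; rewrite /f; case: (tau.1 == i); apply: measurableT_comp.
- by move=> tau; rewrite /f; case: (tau.1 == i); rewrite mgf.
rewrite big_cat !big_map /f /= eqxx ji.
under eq_bigr do rewrite mgf.
under [X in (_ * X)%E]eq_bigr do rewrite mgf.
rewrite !prodEFin !prodr_const_nat !subn0 -!expRM_natl -EFinM -expRD; congr (expR _)%:E.
have Ni0' : Ni%:R != 0 :> R by rewrite pnatr_eq0 -lt0n.
have Nj0' : Nj%:R != 0 :> R by rewrite pnatr_eq0 -lt0n.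
by field; rewrite Ni0' Nj0'.
Qed.

Lemma chernoff_sample_mean_le (i j : I) (Ni Nj : nat) :
  i != j -> (0 < Ni)%N -> (0 < Nj)%N -> m j < m i ->
  (P [set w | (sample_mean (Y i) Ni w <= sample_mean (Y j) Nj w)%R] <=
   (expR (- pair_rate (m i - m j) (s i ^+ 2) (s j ^+ 2) Ni%:R Nj%:R))%:E)%E.
Proof.
move=> ij Ni0 Nj0 mji; rewrite /pair_rate.
set v := s i ^+ 2 / Ni%:R + s j ^+ 2 / Nj%:R.
have v0 : 0 < v by rewrite addr_gt0 ?divr_gt0 ?ltr0n ?exprn_even_gt0 ?s0.
pose D w := sample_mean (Y j) Nj w - sample_mean (Y i) Ni w.
have mD : measurable_fun setT D.
  by apply: measurable_funB; apply: measurable_sample_mean.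
pose Drv : {RV P >-> R} := HB.pack D (isMeasurableFun.Build _ _ _ _ _ mD).
have r0 : 0 < (m i - m j) / v by rewrite divr_gt0 // subr_gt0.
have event : [set w | 0 <= Drv w] =
    [set w | sample_mean (Y i) Ni w <= sample_mean (Y j) Nj w].
  by apply/seteqP; split => w /=; rewrite /D subr_ge0.
have mgfD : ('M_P Drv ((m i - m j) / v) =
    (expR (- ((m i - m j) ^+ 2 / (2 * v))))%:E)%E.
  rewrite /mmt_gen_fun unlock.
  transitivity (\int[P]_w (expR ((m i - m j) / v * D w))%:E)%E.
    by apply: eq_integral => w _ /=; rewrite mulrC.
  rewrite integral_expR_sample_mean_diff //; congr (expR _)%:E.
  by rewrite -/v; field; rewrite gt_eqF.
have := chernoff Drv 0 r0.
by rewrite mulr0 oppr0 expR0 mule1 event mgfD.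
Qed.

End sample_means.

Lemma le_limn_einf (R : realType) (u v : (\bar R)^nat) :
  (\forall n \near \oo, (u n <= v n)%E) -> (limn_einf u <= limn_einf v)%E.
Proof.
move=> [N _ uv]; rewrite !limn_einf_lim.
apply: lee_lim; [exact: is_cvg_einfs | exact: is_cvg_einfs |].
exists N => // n /= Nn; apply: le_ereal_inf_tmp => _ [m /= nm <-].
apply: le_trans (uv m (leq_trans Nn nm)).
by apply: ereal_inf_lbound; exists m.
Qed.

Lemma neglog_ge (R : realType) (p x : R) :
  0 <= p -> p <= expR (- x) -> (x%:E <= neglog p)%E.
Proof.
rewrite /neglog; have [_ _ _|p0 p_ge0 hp] := eqVneq p 0; first exact: leey.
have p_gt0 : 0 < p by rewrite lt0r p0.
by rewrite lee_fin lerNr -(expRK (- x)) ler_ln ?posrE ?expR_gt0.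
Qed.

(* No [0 < n] is needed: at [n = 0] both sides vanish. *)
Lemma rate_seq_ge (R : realType) (p : nat -> \bar R) (n : nat) (x : R) :
  (0 <= p n)%E -> (p n <= (expR (- x))%:E)%E -> ((x / n%:R)%:E <= rate_seq p n)%E.
Proof.
move=> p0 pub; have pfin : p n \is a fin_num.
  by rewrite ge0_fin_numE ?(le_lt_trans pub) ?ltry.
rewrite /rate_seq mulrC EFinM lee_wpmul2l ?lee_fin ?invr_ge0 //.
by apply: neglog_ge; [exact: fine_ge0 | rewrite -lee_fin fineK].
Qed.

Lemma limn_einf_rate_seq_ge (R : realType) (p : nat -> \bar R) (x : R^nat) (G : R) :
  (forall n, 0 <= p n)%E -> x n / n%:R @[n --> \oo] --> G ->
  (\forall n \near \oo, p n <= (expR (- x n))%:E)%E ->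
  (G%:E <= limn_einf (rate_seq p))%E.
Proof.
move=> p0 xG pub; have xG_E : (x n / n%:R)%:E @[n --> \oo] --> G%:E.
  by apply: cvg_EFin => //; exact: nearW.
rewrite -(cvg_limn_einf_sup xG_E).1; apply: le_limn_einf.
by apply: filterS pub => n; exact: rate_seq_ge.
Qed.

Lemma measurable_forall_le d (T : measurableType d) (R : realType) (J : finType)
    (f : T -> R) (g : J -> T -> R) :
  measurable_fun setT f -> (forall j, measurable_fun setT (g j)) ->
  measurable [set w | forall j, f w <= g j w].
Proof.
move=> mf mg; rewrite (_ : [set w | _] = \bigcap_(j in setT) [set w | f w <= g j w]).
  apply: fin_bigcap_measurable => [|j _]; first exact: finite_finset.
  by rewrite -[X in measurable X]setTI; exact: measurable_fun_le.
by apply/seteqP; split => [w wle j _|w wle j]; exact: wle.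
Qed.

Theorem proposition1
  (R : realType) (k B : nat) (hk : (2 <= k)%N)
  (pB : 'I_B -> R) (hp0 : forall b, 0 <= pB b) (hp1 : \sum_(b < B) pB b = 1)
  (y lam : 'I_k -> 'I_B -> R) (hlam : forall i b, 0 < lam i b)
  (ib : 'I_B -> 'I_k)
  (hib : forall b (j : 'I_k), j != ib b -> y (ib b) b < y j b)
  (d : measure_display) (T : measurableType d) (P : probability T R)
  (Y : 'I_k -> 'I_B -> nat -> T -> R)
  (hYmeas : forall i b r, measurable_fun setT (Y i b r))
  (hYnorm : forall i b r (A : set R), measurable A ->
     P (Y i b r @^-1` A) = normal_prob (y i b) (lam i b) A)
  (hYind : mutually_independent P (fun t : 'I_k * 'I_B * nat => Y t.1.1 t.1.2 t.2))
  (alpha : 'I_k -> 'I_B -> R) (ha0 : forall i b, 0 <= alpha i b)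
  (ha1 : \sum_(i < k) \sum_(b < B) alpha i b = 1)
  (N : nat -> 'I_k -> 'I_B -> nat)
  (hNfrac : forall i b, (fun n : nat => ((N n i b)%:R / n%:R : R)) @ \oo --> (alpha i b))
  (hNinf : forall i b, (fun n : nat => N n i b) @ \oo --> \oo)
  (b : 'I_B) (i : 'I_k) (hi : i != ib b) :
  ((Grate y lam alpha (ib b) i b)%:E <=
  limn_einf (rate_seq (fun n =>
     P [set w | forall j : 'I_k,
          (sample_mean (Y i b) (N n i b) w <= sample_mean (Y j b) (N n j b) w)%R])))%E.
Proof.
set j := ib b.
pose E n := [set w | forall j' : 'I_k,
  (sample_mean (Y i b) (N n i b) w <= sample_mean (Y j' b) (N n j' b) w)%R].
pose Yb (a : 'I_k * 'I_B) := Y a.1 a.2.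
have mS a M : measurable_fun setT (sample_mean (Y a b) M).
  exact: (measurable_sample_mean (Y := Yb) (fun a => hYmeas a.1 a.2) (a, b)).
have mE n : measurable (E n) by apply: measurable_forall_le.
rewrite /Grate; case: ifPn => [_|/norP[ai0 aj0]].
  apply: (@limn_einf_rate_seq_ge _ _ (fun=> 0)) => //.
    by under eq_fun do rewrite mul0r; exact: cvg_cst.
  by apply: nearW => n /=; rewrite oppr0 expR0; apply: probability_le1; exact: mE.
apply: (@limn_einf_rate_seq_ge _ _ (fun n => pair_rate (y i b - y j b)
  (lam i b ^+ 2) (lam j b ^+ 2) (N n i b)%:R (N n j b)%:R)) => //.
  under eq_fun do rewrite -pair_rate_scale.
  by apply: cvg_pair_rate; rewrite ?exprn_gt0 ?hlam ?lt0r ?ai0 ?aj0 ?ha0.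
have ij : (i, b) != (j, b) by rewrite xpair_eqE (negbTE hi).
near=> n.
have Ni0 : (0 < N n i b)%N by near: n; apply: (hNinf i b [set m | 0 < m]%N); exists 1%N.
have Nj0 : (0 < N n j b)%N by near: n; apply: (hNinf j b [set m | 0 < m]%N); exists 1%N.
apply: le_trans (chernoff_sample_mean_le (Y := Yb) (m := fun a => y a.1 a.2)
  (s := fun a => lam a.1 a.2) (fun a => lt0r_neq0 (hlam a.1 a.2))
  (fun a => hYmeas a.1 a.2) (fun a => hYnorm a.1 a.2) hYind ij Ni0 Nj0 (hib b i hi)).
apply: le_measure; rewrite ?inE; [exact: mE | | by move=> w /(_ j)].
by rewrite -[X in measurable X]setTI; apply: measurable_fun_le => //; apply: mS.
Unshelve. all: end_near.
Qed.
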